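(* Let $G=(V,E)$ be a (directed) graph with all edges of unit length, let $r\ge0$ be an integer, and let $H=(V,E')$ with $E'\subseteq E$. Then $H$ is an $r$-fault tolerant $2$-spanner of $G$ if and only if for every $(u,v)\in E$, either $(u,v)\in E'$ or there are at least $r+1$ paths of length $2$ from $u$ to $v$ in $E'$.
   Context: $d_H$ denotes the (directed) shortest-path distance in $H$ with unit edge lengths. For $F\subseteq V$, $G\setminus F$ denotes $G$ with the vertices of $F$ and incident edges removed. $H$ is an $r$-fault tolerant $2$-spanner of $G$ if for every $F\subseteq V$ with $|F|\le r$ and all $u,v\in V\setminus F$, $d_{H\setminus F}(u,v)\le 2\,d_{G\setminus F}(u,v)$. Paths of length 2 from $u$ to $v$ are distinguished by their middle vertex. *)

From mathcomp Require Import all_boot.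
Set Implicit Arguments. Unset Strict Implicit. Unset Printing Implicit Defensive.

(* A directed graph on a finite vertex set V is an edge relation e : rel V
   (unit edge lengths).  A subgraph H = (V, E') with E' ⊆ E is a relation
   h with subrel h e. *)

Definition vdel (V : finType) (e : rel V) (F : {set V}) : rel V :=
  [rel x y | [&& e x y, x \notin F & y \notin F]].

Definition walk_len (V : finType) (e : rel V) (u v : V) (k : nat) : Prop :=
  exists p : seq V, [/\ size p = k, path e u p & last u p = v].

(* d_h(u,v) <= c * d_e(u,v), with d = shortest-path distance (possibly
   infinite): whenever there is a u-v walk of length k in e, there is one
   of length at most c*k in h. *)
Definition dist_le_mul (V : finType) (h e : rel V) (c : nat) (u v : V) : Prop :=
  forall k, walk_len e u v k -> exists2 k', k' <= c * k & walk_len h u v k'.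

Definition ft_2spanner (V : finType) (G H : rel V) (r : nat) : Prop :=
  forall (F : {set V}), #|F| <= r ->
    forall u v : V, u \notin F -> v \notin F ->
      dist_le_mul (vdel H F) (vdel G F) 2 u v.

Definition n_2paths (V : finType) (h : rel V) (u v : V) : nat :=
  #|[set w | h u w && h w v]|.

From mathcomp Require Import all_boot.

Set Implicit Arguments.
Unset Strict Implicit.
Unset Printing Implicit Defensive.

(* Sufficiency: a fault set F of size at most r misses one of the r+1 middle
   vertices of every edge not kept in H, so each surviving edge of G \ F is
   replaced by a walk of length at most 2 in H \ F, and walks are stretched by
   at most 2 edge by edge.  Necessity: if an edge (u,v) is not in H and has at
   most r middle vertices, deleting them leaves no u-v walk of length at most
   2 in H, although (u,v) survives in G. *)

Lemma walk_len_edge (V : finType) (e : rel V) (u v : V) :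
  e u v -> walk_len e u v 1.
Proof. by move=> euv; exists [:: v]; rewrite /= euv. Qed.

Lemma walk_len_cat (V : finType) (e : rel V) (x y z : V) (m n : nat) :
  walk_len e x y m -> walk_len e y z n -> walk_len e x z (m + n).
Proof.
move=> [p [<- pp <-]] [q [<- pq <-]].
by exists (p ++ q); rewrite size_cat cat_path last_cat pp pq.
Qed.

Lemma dist_le_mul_edges (V : finType) (h e : rel V) (c : nat) :
  (forall x y, e x y -> exists2 k, k <= c & walk_len h x y k) ->
  forall u v, dist_le_mul h e c u v.
Proof.
move=> stretch u v _ [p [<- pp <-]].
elim: p u pp => [|y p IH] u /=.
  by move=> _; exists 0 => //; exists [::].
case/andP=> /stretch[k1 le_k1 w1] /IH[k2 le_k2 w2].
exists (k1 + k2); first by rewrite mulnS leq_add.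
exact: walk_len_cat w1 w2.
Qed.

Lemma card_lt_exists_notin (T : finType) (A B : {set T}) :
  #|B| < #|A| -> exists2 x, x \in A & x \notin B.
Proof.
move=> ltBA; have /set0Pn[x] : A :\: B != set0.
  apply: contraTneq ltBA => /eqP; rewrite setD_eq0 => /subset_leq_card.
  by rewrite leqNgt => /negbTE->.
by rewrite inE => /andP[xB xA]; exists x.
Qed.

Lemma vdel_edge_2walk (V : finType) (G H : rel V) (r : nat) (F : {set V}) :
  (forall u v : V, G u v -> H u v \/ r.+1 <= n_2paths H u v) -> #|F| <= r ->
  forall x y, vdel G F x y -> exists2 k, k <= 2 & walk_len (vdel H F) x y k.
Proof.
move=> cover leFr x y /and3P[gxy xF yF].
have [hxy | many] := cover _ _ gxy.
  by exists 1 => //; apply: walk_len_edge; rewrite /vdel /= hxy xF yF.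
have [|w] := card_lt_exists_notin (A := [set w | H x w && H w y]) (B := F).
  exact: leq_trans many.
rewrite inE => /andP[hxw hwy] wF; exists 2 => //.
by apply: (walk_len_cat (y := w) (m := 1) (n := 1)); apply: walk_len_edge;
  rewrite /vdel /= ?hxw ?hwy ?xF ?yF wF.
Qed.

Lemma walk_len_avoid_mids (V : finType) (H : rel V) (u v : V) (k : nat) :
  u != v -> k <= 2 ->
  walk_len (vdel H [set w | H u w && H w v]) u v k -> H u v.
Proof.
move=> neq_uv le_k2 [p [size_p walk last_p]].
move: neq_uv le_k2 walk; rewrite -size_p -last_p {size_p last_p}.
case: p => [|a [|b [|? ?]]] //=; rewrite ?eqxx // => _ _ walk.
- by case/andP: walk => /and3P[].
case/and3P: walk => /and3P[hua _ aF] /and3P[hab _ _] _.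
by rewrite inE hua hab in aF.
Qed.

Theorem lemma3p1 (V : finType) (G H : rel V) (r : nat) :
  irreflexive G -> subrel H G ->
  ft_2spanner G H r <->
  (forall u v : V, G u v -> H u v \/ r.+1 <= n_2paths H u v).
Proof.
move=> irrG subHG; split=> [spanner u v guv | cover F leFr u v _ _].
  have [huv | nhuv] := boolP (H u v); [by left | right].
  rewrite ltnNge; apply/negP => few.
  set F := [set w | H u w && H w v].
  have irrH : irreflexive H by move=> x; apply/negbTE/negP => /subHG; rewrite irrG.
  have uF : u \notin F by rewrite inE irrH.
  have vF : v \notin F by rewrite inE irrH andbF.
  have neq_uv : u != v by apply: contraTneq guv => ->; rewrite irrG.
  have edge_uv : vdel G F u v by rewrite /vdel /= guv uF vF.
  have [k le_k2 walk] := spanner F few u v uF vF 1 (walk_len_edge edge_uv).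
  by rewrite (walk_len_avoid_mids neq_uv le_k2 walk) in nhuv.
exact: dist_le_mul_edges (vdel_edge_2walk cover leFr) u v.
Qed.
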